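(* Let $k \geq 2$ and let $\Sigma_k$ be an alphabet with $k$ letters. For $n \geq 0$ let $p_k(n)$ be the number of palstars of length $2n$ over $\Sigma_k$, and let $u_k(n)$ be the number of unbordered strings of length $n$ over $\Sigma_k$. Then for all $n \geq 1$, $$p_k(n) = \sum_{1 \leq i \leq n} u_k(i)\, p_k(n-i).$$
   Context: Let $P = \{ x x^R : x \in \Sigma_k^+\}$ be the set of nonempty even-length palindromes over $\Sigma_k$ (here $x^R$ is the reversal of $x$). A palstar is an element of $P^* = \bigcup_{i\ge 0} P^i$, i.e. a (possibly empty) concatenation of nonempty even-length palindromes; in particular the empty string is a palstar, so $p_k(0)=1$. A nonempty string $x$ is a border of a string $y$ if $x \neq y$ and $x$ is both a prefix and a suffix of $y$; $y$ is unbordered if it has no border (so the empty string and every single letter are unbordered, and $u_k(0)=1$). *)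

From mathcomp Require Import all_boot.
From mathcomp Require Import boolp.
Set Implicit Arguments. Unset Strict Implicit. Unset Printing Implicit Defensive.

Definition even_pal (k : nat) (s : seq 'I_k) : Prop :=
  exists x : seq 'I_k, x != [::] /\ s = x ++ rev x.

Inductive palstar (k : nat) : seq 'I_k -> Prop :=
| palstar_nil : palstar [::]
| palstar_cat (p w : seq 'I_k) : even_pal p -> palstar w -> palstar (p ++ w).

Definition border (k : nat) (x y : seq 'I_k) : Prop :=
  x <> [::] /\ x <> y /\ prefix x y /\ suffix x y.

Definition unbordered (k : nat) (y : seq 'I_k) : Prop :=
  ~ exists x, border x y.

Definition pk (k n : nat) : nat :=
  #|[set t : (2 * n).-tuple 'I_k | `[< palstar (val t) >] ]|.

Definition uk (k n : nat) : nat :=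
  #|[set t : n.-tuple 'I_k | `[< unbordered (val t) >] ]|.

From mathcomp Require Import all_boot.
From mathcomp Require Import boolp.
From mathcomp Require Import zify.
Set Implicit Arguments. Unset Strict Implicit. Unset Printing Implicit Defensive.

(* A nonempty palstar factors as a prime palstar (an even palindrome with no
   shorter nonempty even-palindromic prefix) followed by a palstar: its prime
   prefix is its shortest even-palindromic prefix, and by overlapping
   palindromes that prefix covers at most half of the first factor, whose
   middle is then again a palindrome.  Uniqueness of the prime prefix gives
   p(n) = sum_i q(i) p(n - i), with q(i) the number of prime palstars of
   length 2i.  It remains to show q = u, and both satisfy
   k^n = f(n) + sum_(2j <= n) f(j) k^(n - 2j): a word x of length n either
   makes x x^R prime or has a unique prime prefix, of length 2j <= n; a word
   y either is unbordered or has a unique shortest border, which is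
   unbordered of length j <= n/2.  Strong induction on n concludes. *)

Lemma even_double_half m : ~~ odd m -> m = 2 * m./2.
Proof. by move=> m_even; rewrite mul2n even_halfK. Qed.

Lemma sum_indicator_uniq (r : seq nat) (F : pred nat) : uniq r ->
  {in r &, forall i j, F i -> F j -> i = j} -> \sum_(i <- r) F i = has F r.
Proof.
elim: r => [|x r IH] /=; first by rewrite big_nil.
case/andP=> x_notin r_uniq F_uniq; rewrite big_cons IH //; last first.
  by move=> i j i_in j_in; apply: F_uniq; rewrite inE ?i_in ?j_in orbT.
case Fx: (F x) => //=; case: hasP => // -[j j_in Fj].
have x_eq_j : x = j by apply: F_uniq; rewrite ?inE ?j_in ?orbT ?eqxx.
by move: x_notin; rewrite x_eq_j j_in.
Qed.

Lemma indicator_add_sum_eq1 (r : seq nat) (F : pred nat) (G : bool) : uniq r ->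
  {in r &, forall i j, F i -> F j -> i = j} ->
  (G -> ~~ has F r) -> (~~ G -> has F r) -> 1 = G + \sum_(i <- r) F i.
Proof.
move=> r_uniq F_uniq G_noF nG_F; rewrite sum_indicator_uniq //.
by case: G G_noF nG_F => [/(_ isT)/negbTE -> | _ /(_ isT) ->].
Qed.

Section Words.

Variable k : nat.
Implicit Types (P Q R : pred (seq 'I_k)) (s w x y p q z u v : seq 'I_k).

Definition count_words P n : nat := \sum_(t : n.-tuple 'I_k) P (val t).

Lemma card_words_asbool n (P : seq 'I_k -> Prop) :
  #|[set t : n.-tuple 'I_k | `[< P (val t) >]]| = count_words (fun s => `[< P s >]) n.
Proof.
rewrite -sum1_card big_mkcond /=; apply: eq_bigr => t _.
by rewrite inE; case: asboolP.
Qed.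

Lemma eq_count_words P Q n :
  (forall s, size s = n -> P s = Q s) -> count_words P n = count_words Q n.
Proof. by move=> eqPQ; apply: eq_bigr => t _; rewrite eqPQ // size_tuple. Qed.

Lemma count_words0 P : count_words P 0 = P [::].
Proof. by rewrite /count_words (big_pred1 [tuple]) // => t; apply/esym/eqP/tuple0. Qed.

Lemma count_wordsS P n :
  count_words P n.+1 = \sum_(c : 'I_k) count_words (fun s => P (c :: s)) n.
Proof.
rewrite /count_words pair_big /=.
rewrite (reindex (fun p : 'I_k * n.-tuple 'I_k => [tuple of p.1 :: p.2])) //=.
exists (fun t : n.+1.-tuple 'I_k => (thead t, [tuple of behead t])).
  by case=> c t _ /=; rewrite theadE; congr pair; apply: val_inj.
by move=> t _; rewrite [in RHS](tuple_eta t).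
Qed.

Lemma count_all_words n : count_words xpredT n = k ^ n.
Proof.
elim: n => [|n IHn]; first by rewrite count_words0.
by rewrite count_wordsS (eq_bigr (fun _ => k ^ n)) // sum_nat_const card_ord expnS.
Qed.

Lemma count_words_andbl (b : bool) P n :
  count_words (fun s => b && P s) n = b * count_words P n.
Proof. by case: b; rewrite ?mul1n ?mul0n // /count_words big1. Qed.

Lemma count_words_take_drop P Q a b :
  count_words (fun s => P (take a s) && Q (drop a s)) (a + b) =
  count_words P a * count_words Q b.
Proof.
elim: a P => [|a IHa] P.
  rewrite add0n count_words0 -count_words_andbl.
  by apply: eq_count_words => s _; rewrite take0 drop0.
by rewrite addSn !count_wordsS big_distrl /=; apply: eq_bigr => c _; rewrite -IHa.
Qed.

Lemma count_words_take P a m :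
  count_words (fun s => P (take a s)) (a + m) = count_words P a * k ^ m.
Proof.
rewrite -count_all_words -count_words_take_drop.
by apply: eq_count_words => s _; rewrite andbT.
Qed.

Lemma count_words_eq w P : count_words (fun s => (s == w) && P s) (size w) = P w.
Proof.
elim: w P => [|c w IHw] P; first by rewrite count_words0.
rewrite count_wordsS (bigD1 c) //= big1 ?addn0.
  rewrite -(IHw (fun s => P (c :: s))).
  by apply: eq_count_words => s _; rewrite eqseq_cons eqxx.
move=> d /negbTE d_neq_c; rewrite /count_words big1 // => t _.
by rewrite eqseq_cons d_neq_c.
Qed.

Lemma count_words_drop_fun (f : seq 'I_k -> seq 'I_k) P a m :
  (forall x, size x = a -> size (f x) = m) ->
  count_words (fun s => (drop a s == f (take a s)) && P s) (a + m) =
  count_words (fun x => P (x ++ f x)) a.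
Proof.
elim: a f P => [|a IHa] f P size_f.
  rewrite add0n count_words0 /= -(size_f [::]) // -count_words_eq.
  by apply: eq_count_words => s _; rewrite drop0 take0; case: eqP => // ->.
rewrite addSn !count_wordsS; apply: eq_bigr => c _ /=.
rewrite -(IHa (fun x => f (c :: x)) (fun s => P (c :: s))) // => x size_x.
by apply: size_f; rewrite /= size_x.
Qed.

Lemma count_words_sum P n (r : seq nat) (Q : nat -> pred (seq 'I_k)) :
  (forall s, size s = n -> P s = \sum_(j <- r) Q j s :> nat) ->
  count_words P n = \sum_(j <- r) count_words (Q j) n.
Proof.
move=> P_sum; rewrite /count_words exchange_big /=; apply: eq_bigr => t _.
by rewrite P_sum // size_tuple.
Qed.

Lemma count_words_add_sum P R n (r : seq nat) (Q : nat -> pred (seq 'I_k)) :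
  (forall s, size s = n -> P s = R s + \sum_(j <- r) Q j s :> nat) ->
  count_words P n = count_words R n + \sum_(j <- r) count_words (Q j) n.
Proof.
move=> P_sum; rewrite /count_words exchange_big /= -big_split /=.
by apply: eq_bigr => t _; rewrite P_sum // size_tuple.
Qed.


Definition palindrome s := rev s == s.

Definition even_palb s := [&& s != [::], ~~ odd (size s) & palindrome s].

Definition prime_palstar s :=
  even_palb s && all (fun i => ~~ even_palb (take i s)) (iota 0 (size s)).

Definition borderb j y := take j y == drop (size y - j) y.

Definition unborderedb y := all (fun j => ~~ borderb j y) (index_iota 1 (size y)).

Definition palstarb s : bool := `[< palstar s >].

Lemma drop_palindrome p a :
  palindrome p -> a <= size p -> drop (size p - a) p = rev (take a p).
Proof. by move=> /eqP p_pal a_le; rewrite -[X in drop _ X]p_pal drop_rev subKn. Qed.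

Lemma even_palP s : even_pal s <-> even_palb s.
Proof.
split=> [[x [x_neq0 ->]] | s_even].
  rewrite /even_palb /palindrome rev_cat revK eqxx size_cat size_rev addnn.
  by rewrite odd_double andbT; case: x x_neq0.
case/and3P: (s_even) => s_neq0 /even_double_half s_size s_pal.
have s_gt0 : 0 < size s by rewrite lt0n size_eq0.
exists (take (size s)./2 s); split.
  by apply/eqP => /(congr1 size); rewrite size_takel /=; lia.
rewrite -{1}(cat_take_drop (size s)./2 s) -drop_palindrome //; last lia.
by congr (_ ++ drop _ s); lia.
Qed.

Lemma even_palb_take_size s a :
  even_palb (take a s) -> a <= size s -> 0 < a /\ ~~ odd a.
Proof.
case/and3P=> s_neq0 s_even _ a_le; rewrite size_takel // in s_even.
by split=> //; case: a s_neq0 {s_even a_le}; rewrite ?take0.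
Qed.

Lemma unborderedP y :
  reflect (forall j, 0 < j < size y -> ~~ borderb j y) (unborderedb y).
Proof.
apply: (iffP allP) => [noB j j_range | noB j]; last by rewrite mem_index_iota; apply: noB.
by apply: noB; rewrite mem_index_iota.
Qed.

Lemma unbordered_unborderedb y : unbordered y <-> unborderedb y.
Proof.
split=> [noB | /unborderedP noB [x [x_neq0 [x_neq_y [x_pre x_suf]]]]].
  apply/unborderedP => j j_range; apply/negP => /eqP border_j.
  have size_j : size (take j y) = j by rewrite size_takel //; lia.
  apply: noB; exists (take j y); split; [|split; [|split]].
  - by move=> /(congr1 size); rewrite size_j /=; lia.
  - by move=> /(congr1 size); rewrite size_j; lia.
  - by rewrite prefixE size_j.
  - by rewrite suffixE size_j border_j.
move: x_pre x_suf; rewrite prefixE suffixE => /eqP x_pre /eqP x_suf.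
have x_le : size x <= size y by rewrite -x_pre size_take; case: ltnP; lia.
have x_gt0 : 0 < size x by rewrite lt0n size_eq0; apply/eqP.
have x_neq : size x != size y.
  by apply/eqP => size_eq; apply: x_neq_y; rewrite -x_pre size_eq take_size.
by have /negP[] := noB (size x) ltac:(lia); rewrite /borderb x_pre x_suf.
Qed.

Lemma prime_palstar_take s a : prime_palstar s -> a < size s -> ~~ even_palb (take a s).
Proof. by case/andP=> _ /allP noE a_lt; apply: noE; rewrite mem_iota. Qed.

Lemma prime_palstar_take_inj s a b : a <= size s -> b <= size s ->
  prime_palstar (take a s) -> prime_palstar (take b s) -> a = b.
Proof.
have no_shorter i j : i < j <= size s ->
    prime_palstar (take i s) -> ~~ prime_palstar (take j s).
  case/andP=> ij j_le /andP[Ei _]; apply: contraL Ei => Pj.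
  by rewrite -(take_takel s (ltnW ij)) prime_palstar_take // size_takel.
move=> a_le b_le Pa Pb; case: (ltngtP a b) => // [ab | ba].
  by case/negP: (no_shorter a b ltac:(lia) Pa).
by case/negP: (no_shorter b a ltac:(lia) Pb).
Qed.

Lemma prime_palstar_prefix_exists s b : even_palb (take b s) -> b <= size s ->
  exists2 a, a <= b & prime_palstar (take a s).
Proof.
move=> Eb b_le; have ex_even : exists a, even_palb (take a s) by exists b.
case: (ex_minnP ex_even) => a Ea a_min; have a_le := a_min b Eb.
exists a => //; rewrite /prime_palstar Ea; apply/allP => i.
rewrite mem_iota size_takel /= => [i_lt|]; last lia.
by rewrite take_takel ?(ltnW i_lt) //; apply/negP => /a_min; lia.
Qed.

Lemma even_palb_overlap p a : even_palb p -> even_palb (take a p) ->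
  size p < 2 * a -> a < size p -> even_palb (take (2 * a - size p) p).
Proof.
move=> /and3P[_ /even_double_half p_size p_pal] /and3P[_ _ q_pal] p_lt a_lt.
have q_size : size (take a p) = a by rewrite size_takel // ltnW.
have q_border : drop (size p - a) p = take a p.
  by rewrite drop_palindrome ?(eqP q_pal) // ltnW.
have L_pal : palindrome (take (2 * a - size p) (take a p)).
  apply/eqP; rewrite -drop_palindrome // q_size; last lia.
  rewrite (_ : a - _ = size p - a); last lia.
  rewrite -[in RHS]q_border take_drop; congr (drop _ (take _ p)); lia.
rewrite take_takel in L_pal; last lia.
apply/and3P; split=> //.
  by apply/eqP => /(congr1 size); rewrite size_takel /=; lia.
rewrite size_takel; last lia.
by rewrite (_ : 2 * a - _ = 2 * (a - (size p)./2)) ?oddM //; lia.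
Qed.

Lemma prime_palstar_take_le_half p a : even_palb p -> prime_palstar (take a p) ->
  a < size p -> 2 * a <= size p.
Proof.
move=> p_even Pa a_lt; rewrite leqNgt; apply/negP => p_lt.
have L_lt : 2 * a - size p < size (take a p) by rewrite size_takel; lia.
case/negP: (prime_palstar_take Pa L_lt); rewrite take_takel; last lia.
by apply: even_palb_overlap => //; case/andP: Pa.
Qed.

Lemma cat_palstar u v : palstar u -> palstar v -> palstar (u ++ v).
Proof.
by elim=> [|p w p_even _ IHw] // v_pal; rewrite -catA; apply: palstar_cat => //; apply: IHw.
Qed.

Lemma palstar_even_palb p : even_palb p -> palstar p.
Proof.
by move/even_palP => p_even; rewrite -(cats0 p); apply: palstar_cat => //; apply: palstar_nil.
Qed.

Lemma palindrome_cat_middle q z : palindrome q -> palindrome (q ++ z ++ q) -> palindrome z.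
Proof.
rewrite /palindrome => /eqP q_pal.
by rewrite !rev_cat q_pal -catA eqseq_cat // eqseq_cat ?size_rev // => /andP[_ /andP[]].
Qed.

Lemma palstar_drop_prime_prefix p a : even_palb p -> prime_palstar (take a p) ->
  a < size p -> palstar (drop a p).
Proof.
move=> p_even Pa a_lt; have a_half := prime_palstar_take_le_half p_even Pa a_lt.
case/and3P: (p_even) => _ /even_double_half p_size p_pal.
case/andP: (Pa) => q_even _; case/and3P: (q_even) => _ _ q_pal.
set z := take (size p - 2 * a) (drop a p).
have drop_eq : drop a p = z ++ take a p.
  rewrite -{1}(cat_take_drop (size p - 2 * a) (drop a p)) drop_drop.
  rewrite (_ : size p - 2 * a + a = size p - a); last lia.
  by rewrite drop_palindrome ?(eqP q_pal) // ltnW.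
have z_pal : palindrome z.
  by apply: (palindrome_cat_middle q_pal); rewrite -drop_eq cat_take_drop.
rewrite drop_eq; case: (eqVneq z [::]) => [-> | z_neq0]; first exact: palstar_even_palb.
apply: cat_palstar; apply: palstar_even_palb => //; apply/and3P; split=> //.
rewrite size_takel ?size_drop; last lia.
by rewrite (_ : size p - 2 * a = 2 * ((size p)./2 - a)) ?oddM //; lia.
Qed.

Lemma palstar_prime_prefix s : palstar s -> s != [::] ->
  exists a, [/\ a <= size s, prime_palstar (take a s) & palstar (drop a s)].
Proof.
case=> [|p w /even_palP p_even w_pal] // _.
have [a a_le Pa] : exists2 a, a <= size p & prime_palstar (take a p).
  by apply: prime_palstar_prefix_exists; rewrite ?take_size.
exists a; split; first by rewrite size_cat; lia.
  by rewrite takel_cat.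
have [a_lt | ->] : a < size p \/ a = size p by lia.
  by rewrite drop_cat a_lt; apply: cat_palstar => //; apply: palstar_drop_prime_prefix.
by rewrite drop_size_cat.
Qed.

Lemma palstarb_decomp n s : 0 < n -> size s = 2 * n ->
  palstarb s = \sum_(1 <= i < n.+1)
                 (prime_palstar (take (2 * i) s) && palstarb (drop (2 * i) s)) :> nat.
Proof.
move=> n_gt0 s_size; rewrite sum_indicator_uniq ?iota_uniq //; last first.
  move=> i j; rewrite !mem_index_iota => i_range j_range /andP[Pi _] /andP[Pj _].
  suff: 2 * i = 2 * j by lia.
  by apply: (prime_palstar_take_inj _ _ Pi Pj); rewrite s_size; lia.
congr (nat_of_bool _); apply/idP/hasP => [/asboolP s_pal | [i i_range /andP[Pi rest]]].
  have s_neq0 : s != [::] by rewrite -size_eq0 s_size; lia.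
  have [a [a_le Pa rest]] := palstar_prime_prefix s_pal s_neq0.
  have [a_gt0 /even_double_half a_eq] := even_palb_take_size (proj1 (andP Pa)) a_le.
  exists a./2; first by rewrite mem_index_iota; lia.
  by rewrite -a_eq Pa; apply/asboolP.
apply/asboolP; rewrite -(cat_take_drop (2 * i) s); apply: cat_palstar; last exact/asboolP.
by apply: palstar_even_palb; case/andP: Pi.
Qed.

Lemma count_palstar n : 0 < n ->
  count_words palstarb (2 * n) =
  \sum_(1 <= i < n.+1) count_words prime_palstar (2 * i) * count_words palstarb (2 * (n - i)).
Proof.
move=> n_gt0; rewrite (count_words_sum (fun s => @palstarb_decomp n s n_gt0)).
apply: eq_big_nat => i /andP[i_gt0 i_le].
by rewrite (_ : 2 * n = 2 * i + 2 * (n - i)) ?count_words_take_drop //; lia.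
Qed.

Lemma prime_palstar_mirror_decomp n x : 0 < n -> size x = n ->
  1 = prime_palstar (x ++ rev x) +
      \sum_(1 <= j < n) ((2 * j <= n) && prime_palstar (take (2 * j) x)).
Proof.
move=> n_gt0 x_size; apply: indicator_add_sum_eq1; first exact: iota_uniq.
- move=> i j _ _ /andP[i_le Pi] /andP[j_le Pj]; suff: 2 * i = 2 * j by lia.
  by apply: (prime_palstar_take_inj _ _ Pi Pj); rewrite x_size.
- move=> P_mirror; apply/hasPn => j; rewrite mem_index_iota => j_range.
  apply/negP => /andP[j_le /andP[Ej _]].
  have j_lt : 2 * j < size (x ++ rev x) by rewrite size_cat size_rev; lia.
  by case/negP: (prime_palstar_take P_mirror j_lt); rewrite takel_cat ?x_size.
move=> not_prime; set w := x ++ rev x.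
have x_neq0 : x != [::] by rewrite -size_eq0 x_size -lt0n.
have w_even : even_palb w by apply/even_palP; exists x.
have w_size : size w = 2 * n by rewrite size_cat size_rev x_size; lia.
have [i i_lt Ei] : exists2 i, i < size w & even_palb (take i w).
  move: not_prime; rewrite /prime_palstar w_even => /allPn[i].
  by rewrite mem_iota negbK => i_range Ei; exists i.
have [a a_le Pa] := prime_palstar_prefix_exists Ei (ltnW i_lt).
have a_half := prime_palstar_take_le_half w_even Pa (leq_ltn_trans a_le i_lt).
have [a_gt0 /even_double_half a_eq] :=
  even_palb_take_size (proj1 (andP Pa)) (ltnW (leq_ltn_trans a_le i_lt)).
apply/hasP; exists a./2; first by rewrite mem_index_iota; lia.
rewrite -a_eq; apply/andP; split; first lia.
by rewrite /w takel_cat ?x_size in Pa; lia.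
Qed.

Lemma count_prime_palstar_rec n : 0 < n ->
  k ^ n = count_words prime_palstar (2 * n) +
          \sum_(1 <= j < n) (2 * j <= n) * (count_words prime_palstar (2 * j) * k ^ (n - 2 * j)).
Proof.
move=> n_gt0; rewrite -count_all_words.
rewrite (count_words_add_sum (P := xpredT) (fun x => @prime_palstar_mirror_decomp n x n_gt0)).
congr addn.
  rewrite -(@count_words_drop_fun rev prime_palstar n n) => [|x]; last by rewrite size_rev.
  rewrite addnn -mul2n; apply: eq_count_words => s s_size.
  case P_s: (prime_palstar s); rewrite ?andbF ?andbT //.
  case/andP: P_s => /and3P[_ _ s_pal] _.
  rewrite [in drop _ s](_ : n = size s - n); last lia.
  by rewrite drop_palindrome ?eqxx // s_size; lia.
apply: eq_big_nat => j /andP[j_gt0 j_lt].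
rewrite count_words_andbl; case: (leqP (2 * j) n) => j_le; rewrite ?mul0n ?mul1n //.
by rewrite -count_words_take subnKC.
Qed.

Lemma border_of_border y i j : i <= j <= size y -> borderb j y ->
  borderb i (take j y) = borderb i y.
Proof.
case/andP=> ij j_le /eqP Bj; rewrite /borderb size_takel // take_takel //.
by rewrite [in drop _ (take j y)]Bj drop_drop (_ : j - i + _ = size y - i) //; lia.
Qed.

Lemma unborderedb_border_le_half y j : 0 < j < size y -> borderb j y ->
  unborderedb (take j y) -> 2 * j <= size y.
Proof.
move=> /andP[j_gt0 j_lt] /eqP Bj /unborderedP noB; rewrite leqNgt; apply/negP => y_lt.
have L_range : 0 < 2 * j - size y < size (take j y) by rewrite size_takel; lia.
case/negP: (noB _ L_range); rewrite /borderb size_takel; last lia.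
rewrite (_ : j - _ = size y - j); last lia.
rewrite (_ : drop _ (take j y) = take (2 * j - size y) (drop (size y - j) y)).
  by rewrite -Bj.
by rewrite take_drop; congr (drop _ (take _ y)); lia.
Qed.

Lemma unborderedb_decomp n y : 0 < n -> size y = n ->
  1 = unborderedb y +
      \sum_(1 <= j < n) [&& 2 * j <= n, borderb j y & unborderedb (take j y)].
Proof.
move=> n_gt0 y_size; apply: indicator_add_sum_eq1; first exact: iota_uniq.
- have no_shorter i j : 0 < i < j -> j <= n -> borderb i y -> borderb j y ->
      ~~ unborderedb (take j y).
    move=> /andP[i_gt0 ij] j_le Bi Bj; apply/negP => /unborderedP/(_ i).
    rewrite border_of_border ?Bi ?size_takel ?y_size //; last lia.
    by move=> /(_ ltac:(lia)).
  move=> i j; rewrite !mem_index_iota => i_range j_range.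
  move=> /and3P[_ Bi Ui] /and3P[_ Bj Uj]; case: (ltngtP i j) => // [ij | ji].
    by case/negP: (no_shorter i j ltac:(lia) ltac:(lia) Bi Bj).
  by case/negP: (no_shorter j i ltac:(lia) ltac:(lia) Bj Bi).
- move=> /unborderedP noB; apply/hasPn => j; rewrite mem_index_iota => j_range.
  by apply/negP => /and3P[_ Bj _]; move: (noB j ltac:(lia)); rewrite Bj.
move=> /allPn[j]; rewrite mem_index_iota negbK => j_range Bj.
have ex_border : exists a, (0 < a < n) && borderb a y by exists j; rewrite Bj andbT -y_size.
case: (ex_minnP ex_border) => a /andP[a_range Ba] a_min.
have Ua : unborderedb (take a y).
  apply/unborderedP => i; rewrite size_takel => [i_range|]; last lia.
  rewrite border_of_border //; last lia.
  by apply/negP => Bi; have := a_min i; rewrite Bi andbT; lia.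
have a_half : 2 * a <= size y by apply: unborderedb_border_le_half Ba Ua; lia.
by apply/hasP; exists a; rewrite ?mem_index_iota ?Ba ?Ua ?andbT; lia.
Qed.

Lemma count_unbordered_rec n : 0 < n ->
  k ^ n = count_words unborderedb n +
          \sum_(1 <= j < n) (2 * j <= n) * (count_words unborderedb j * k ^ (n - 2 * j)).
Proof.
move=> n_gt0; rewrite -count_all_words.
rewrite (count_words_add_sum (P := xpredT) (fun y => @unborderedb_decomp n y n_gt0)).
congr addn; apply: eq_big_nat => j /andP[j_gt0 j_lt].
rewrite count_words_andbl; case: (leqP (2 * j) n) => j_le; rewrite ?mul0n ?mul1n //.
transitivity (count_words (fun s => (drop (n - j) s == take j (take (n - j) s)) &&
                                    unborderedb (take j s)) (n - j + j)).
  rewrite subnK; last lia.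
  apply: eq_count_words => s s_size; rewrite take_takel; last lia.
  by rewrite /borderb s_size eq_sym.
rewrite count_words_drop_fun => [|x x_size]; last by rewrite size_takel ?x_size; lia.
rewrite (_ : n - j = j + (n - 2 * j)); last lia.
rewrite -count_words_take; apply: eq_count_words => s s_size.
by rewrite takel_cat // s_size leq_addr.
Qed.

Lemma count_prime_palstar_unbordered n : 0 < n ->
  count_words prime_palstar (2 * n) = count_words unborderedb n.
Proof.
elim/ltn_ind: n => n IHn n_gt0.
have sums_eq :
    \sum_(1 <= j < n) (2 * j <= n) * (count_words prime_palstar (2 * j) * k ^ (n - 2 * j)) =
    \sum_(1 <= j < n) (2 * j <= n) * (count_words unborderedb j * k ^ (n - 2 * j)).
  by apply: eq_big_nat => j /andP[j_gt0 j_lt]; rewrite IHn.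
have := count_prime_palstar_rec n_gt0.
by rewrite count_unbordered_rec // sums_eq => /addIn <-.
Qed.

End Words.

Theorem lemma1 (k n : nat) : 2 <= k -> 1 <= n ->
  pk k n = \sum_(1 <= i < n.+1) uk k i * pk k (n - i).
Proof.
move=> _ n_gt0.
have pkE m : pk k m = count_words (@palstarb k) (2 * m) by rewrite /pk card_words_asbool.
have ukE m : uk k m = count_words (@unborderedb k) m.
  rewrite /uk card_words_asbool; apply: eq_count_words => y _.
  by apply/asboolP/idP => /unbordered_unborderedb.
rewrite pkE count_palstar //; apply: eq_big_nat => i /andP[i_gt0 _].
by rewrite pkE ukE count_prime_palstar_unbordered.
Qed.
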